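(* Let $M\ge 2$, let $\gamma_1,\dots,\gamma_{M-1}$ be nonzero real numbers and $J_1,\dots,J_{M-1}$ real numbers, and consider on the open chain of $M$ sites $$H_{\gamma J}=\sum_{m=1}^{M-1}\Big(J_m c_{m+1}^\dagger c_m\sigma_{m+1}^+ + \text{h.c.}\Big) - \sum_{m=1}^{M-1}\Big(\gamma_m c_{m+1}^\dagger c_m + \text{h.c.}\Big).$$ Then the subspace of states with exactly two fermions and spin on site $1$ equal to $|\uparrow\rangle$ contains at least $2^{M-1}$ linearly independent states $|\Psi\rangle$ with $H_{\gamma J}|\Psi\rangle=0$.
   Context: Each site $m$ carries one spinless fermion mode ($c_m,c_m^\dagger$, canonical anticommutation relations) and one spin-$1/2$ with Pauli matrices $\sigma_m^{x,y,z}$; $\sigma_m^{\pm}=\sigma_m^x\pm i\sigma_m^y$. $H_{\gamma J}$ conserves the total fermion number and does not act on the spin at site $1$. *)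

From HB Require Import structures.
From mathcomp Require Import all_boot all_order all_algebra.
From mathcomp Require Import reals.
From mathcomp Require Import complex.
Set Implicit Arguments. Unset Strict Implicit. Unset Printing Implicit Defensive.
Import Order.TTheory GRing.Theory Num.Theory.
Local Open Scope ring_scope.
Local Open Scope complex_scope.

Section Chain.
Variables (R : realType) (M : nat).
Local Notation C := R[i].

(* Occupation-number / spin basis of the chain of M sites (sites 0..M-1 stand
   for the paper's sites 1..M).  A basis state assigns to each site a pair
   (n, s) : bool * bool, n = fermion occupation, s = true iff spin is up. *)
Definition bstate := {ffun 'I_M -> bool * bool}.

Definition at_site (s : bstate) (m : nat) : bool * bool :=
  if insub m is Some i then s i else (false, false).

Definition upd (s : bstate) (m : nat) (x : bool * bool) : bstate :=
  [ffun i => if val i == m then x else s i].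

(* Hilbert space C^(basis) = C^#|bstate|; operators are matrices given by
   their matrix elements <s'| O |s>. *)
Definition hdim := #|{: bstate}|.
Definition opmx (f : bstate -> bstate -> C) : 'M[C]_hdim :=
  \matrix_(i, j) f (enum_val i) (enum_val j).

Definition adj (A : 'M[C]_hdim) : 'M[C]_hdim := map_mx (@conjc R) A^T.

Definition jw (s : bstate) (m : nat) : C :=
  (-1) ^+ #|[set i : 'I_M | (val i < m)%N && (s i).1]|.

(* fermion annihilation operator c_m (Jordan-Wigner representation of the CAR) *)
Definition cop (m : nat) : 'M[C]_hdim :=
  opmx (fun s' s => if (at_site s m).1 && (s' == upd s m (false, (at_site s m).2))
                    then jw s m else 0).
Definition cdag (m : nat) : 'M[C]_hdim := adj (cop m).

(* Pauli matrices on the spin of site m, basis (up, down) *)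
Definition flip_sp (s' s : bstate) (m : nat) : bool :=
  s' == upd s m ((at_site s m).1, ~~ (at_site s m).2).
Definition sigx (m : nat) : 'M[C]_hdim :=
  opmx (fun s' s => if flip_sp s' s m then 1 else 0).
Definition sigy (m : nat) : 'M[C]_hdim :=
  opmx (fun s' s => if flip_sp s' s m then (if (at_site s m).2 then 'i else - 'i) else 0).
Definition sigz (m : nat) : 'M[C]_hdim :=
  opmx (fun s' s => if s' == s then (if (at_site s m).2 then 1 else -1) else 0).
Definition sigp (m : nat) : 'M[C]_hdim := sigx m + 'i *: sigy m.
Definition sigm (m : nat) : 'M[C]_hdim := sigx m - 'i *: sigy m.

(* H_{gamma J}; bond k (0 <= k < M-1) joins sites k and k+1
   (paper's bond m = k+1 joining sites m, m+1) *)
Definition HgJ (J gam : 'I_M.-1 -> R) : 'M[C]_hdim :=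
  \sum_(k < M.-1)
     (((J k)%:C *: (cdag k.+1 *m cop k *m sigp k.+1))
      + adj ((J k)%:C *: (cdag k.+1 *m cop k *m sigp k.+1)))
  - \sum_(k < M.-1)
     (((gam k)%:C *: (cdag k.+1 *m cop k))
      + adj ((gam k)%:C *: (cdag k.+1 *m cop k))).

Definition Nop : 'M[C]_hdim := \sum_(m < M) (cdag m *m cop m).

End Chain.

(* The two-fermion states with spin up at site 1 whose fermions occupy two
   adjacent sites m, m+1 (all other spins arbitrary) span a space D of dimension
   (M-1) 2^(M-1), on which N = 2 and sigma^z_1 = 1.  Every term of H moves one
   fermion by one site, and the move towards the other fermion is blocked by
   Pauli exclusion; so H maps D into the span of the states whose fermions sit at
   distance two, of dimension (M-2) 2^(M-1).  Hence H has a kernel of dimension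
   at least 2^(M-1) inside D, whatever the couplings. *)

From mathcomp Require Import all_boot all_order all_algebra.
From mathcomp Require Import reals.
From mathcomp Require Import complex.
From mathcomp Require Import zify.
Import GRing.Theory.
Local Open Scope ring_scope.
Local Open Scope complex_scope.

Section Supported.
Context {K : pzRingType} {T : finType}.
Local Notation n := #|{: T}|.

Definition supported (A : 'M[K]_n) (P : T -> T -> Prop) :=
  forall i j, A i j != 0 -> P (enum_val i) (enum_val j).

Lemma supportedW {A} {P Q : T -> T -> Prop} :
  supported A P -> (forall x y, P x y -> Q x y) -> supported A Q.
Proof. by move=> hA PQ i j /hA /PQ. Qed.

Lemma supported_mul {A B P Q} : supported A P -> supported B Q ->
  supported (A *m B) (fun x z => exists y, P x y /\ Q y z).
Proof.
move=> hA hB i j; rewrite mxE => /eqP nz.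
have [k /= | no_k] := pickP (fun k => (A i k != 0) && (B k j != 0)).
  by case/andP=> /hA ? /hB ?; exists (enum_val k).
case: nz; apply: big1 => k _.
by case: eqP (no_k k) => [-> _|_ /= /negbFE/eqP ->]; rewrite ?mul0r ?mulr0.
Qed.

Lemma supported_add {A B P} : supported A P -> supported B P -> supported (A + B) P.
Proof.
move=> hA hB i j; rewrite mxE.
by case: (eqVneq (A i j) 0) => [-> | /hA //]; rewrite add0r => /hB.
Qed.

Lemma supported_opp {A P} : supported A P -> supported (- A) P.
Proof. by move=> hA i j; rewrite mxE oppr_eq0 => /hA. Qed.

Lemma supported_scale {a A P} : supported A P -> supported (a *: A) P.
Proof.
move=> hA i j; rewrite mxE.
by case: (eqVneq (A i j) 0) => [-> | /hA //]; rewrite mulr0 eqxx.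
Qed.

Lemma supported_sum {I : finType} {F : I -> 'M[K]_n} {P} :
  (forall k, supported (F k) P) -> supported (\sum_k F k) P.
Proof.
move=> hF i j; rewrite summxE => /eqP nz.
have [k /= /hF // | no_k] := pickP (fun k => F k i j != 0).
by case: nz; apply: big1 => k _; apply/eqP/negbFE/no_k.
Qed.

End Supported.

Lemma sum_enum_val_eq {K : pzSemiRingType} {T : finType} (G : 'I_#|{: T}| -> K) (t : T) :
  \sum_c (enum_val c == t)%:R * G c = G (enum_rank t).
Proof.
rewrite (bigD1 (enum_rank t)) // enum_rankK eqxx mul1r /= big1 ?addr0 // => c c_neq.
by case: (enum_val c =P t) c_neq => [<- | _ _]; rewrite ?enum_valK ?eqxx ?mul0r.
Qed.

Section BasisMatrix.
Context {F : fieldType} {T : finType}.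
Local Notation n := #|{: T}|.

Definition basis_mx {I : finType} (f : I -> T) : 'M[F]_(#|{: I}|, n) :=
  \matrix_(r, c) (enum_val c == f (enum_val r))%:R.

Lemma mul_tr_basis_mx {I : finType} (f : I -> T) m (X : 'M[F]_(m, n)) r q :
  (X *m (basis_mx f)^T) r q = X r (enum_rank (f (enum_val q))).
Proof.
rewrite mxE; under eq_bigr => c _ do rewrite !mxE mulrC.
exact: sum_enum_val_eq.
Qed.

Lemma basis_mx_mul_tr {I : finType} (f : I -> T) (A : 'M[F]_n) r c :
  (basis_mx f *m A^T) r c = A c (enum_rank (f (enum_val r))).
Proof. by rewrite -[basis_mx f]trmxK -trmx_mul mxE mul_tr_basis_mx. Qed.

Lemma basis_mx_free {I : finType} {f : I -> T} :
  injective f -> row_free (basis_mx f).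
Proof.
move=> f_inj; apply/row_freeP; exists (basis_mx f)^T; apply/matrixP => r r'.
rewrite !mxE; under eq_bigr => c _ do rewrite !mxE.
by rewrite sum_enum_val_eq enum_rankK (inj_eq f_inj) (inj_eq enum_val_inj).
Qed.

Lemma submx_basis_mx {I : finType} (f : I -> T) m (X : 'M[F]_(m, n)) :
  injective f -> (forall r c, X r c != 0 -> exists q, enum_val c = f q) ->
  (X <= basis_mx f)%MS.
Proof.
move=> f_inj hX; apply/submxP; exists (X *m (basis_mx f)^T).
apply/matrixP => r c; rewrite mxE.
under eq_bigr => q _ do rewrite mul_tr_basis_mx mxE.
case: (pickP (fun q => enum_val c == f q)) => [q0 /eqP c_eq | no_q].
  under eq_bigr => q _ do rewrite c_eq (inj_eq f_inj) eq_sym mulrC.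
  rewrite (sum_enum_val_eq (T := I) (fun q => X r (enum_rank (f (enum_val q))))).
  by rewrite enum_rankK -c_eq enum_valK.
rewrite big1 => [|q _]; last by rewrite no_q mulr0.
by apply/eqP; apply: contraT => /hX [q c_eq]; move: (no_q q); rewrite c_eq eqxx.
Qed.

Lemma basis_mx_mul_supported {I J : finType} {f : I -> T} {g : J -> T} {A P} :
  injective g -> supported A P -> (forall p s, P s (f p) -> exists q, s = g q) ->
  (basis_mx f *m A^T <= basis_mx g)%MS.
Proof.
move=> g_inj hA hfg; apply: submx_basis_mx => // r c.
by rewrite basis_mx_mul_tr => /hA; rewrite enum_rankK => /hfg.
Qed.

Lemma basis_mx_mul_diag {I : finType} {f : I -> T} {D : 'M[F]_n} (d : T -> F) {a} :
  (forall i j, D i j = (i == j)%:R * d (enum_val j)) -> (forall p, d (f p) = a) ->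
  basis_mx f *m D^T = a *: basis_mx f.
Proof.
move=> hD hd; apply/matrixP => r c; rewrite basis_mx_mul_tr hD !mxE enum_rankK hd.
by rewrite -(inj_eq enum_val_inj) enum_rankK mulrC.
Qed.

End BasisMatrix.

Section RowSpaces.
Context {F : fieldType}.

Lemma row_free_sub_ker {m n p q r} {B : 'M[F]_(m, n)} {A : 'M_(n, q)} {S : 'M_(p, q)} :
  row_free B -> (B *m A <= S)%MS -> (p + r <= m)%N ->
  exists P : 'M_(r, n), [/\ row_free P, (P <= B)%MS & P *m A = 0].
Proof.
move=> freeB BA_S r_le.
pose X := kermx (B *m A) *m B.
have r_le_rkX : (r <= \rank X)%N.
  rewrite mxrankMfree // mxrank_ker.
  have := mxrankS BA_S; have := rank_leq_row S; lia.
pose P := (pid_mx r : 'M_(r, \rank X)) *m row_base X.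
have PX : (P <= X)%MS by rewrite (submx_trans (submxMl _ _)) ?eq_row_base.
exists P; split.
- by rewrite /row_free mxrankMfree ?row_base_free // rank_pid_mx.
- exact: submx_trans PX (submxMl _ _).
- have XA : X *m A = 0 by rewrite -mulmxA mulmx_ker.
  by case/submxP: PX => W ->; rewrite -mulmxA XA mulmx0.
Qed.

Lemma submx_mul_scale {m1 m2 n} {P : 'M[F]_(m1, n)} {B : 'M_(m2, n)} {Y : 'M_n} {a} :
  (P <= B)%MS -> B *m Y = a *: B -> P *m Y = a *: P.
Proof. by case/submxP=> W -> BY; rewrite -mulmxA BY scalemxAr. Qed.

Lemma row_tr_mul_scale {m n} {P : 'M[F]_(m, n)} {Y : 'M_n} {a} k :
  P *m Y^T = a *: P -> Y *m (row k P)^T = a *: (row k P)^T.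
Proof.
move=> PY; rewrite -[Y]trmxK -trmx_mul -row_mul PY.
by apply/matrixP => i j; rewrite !mxE.
Qed.

End RowSpaces.

Section Sites.
Context {M : nat}.
Local Notation bs := (bstate M).

Lemma at_site_ord (s : bs) (i : 'I_M) : at_site s i = s i.
Proof. by rewrite /at_site valK. Qed.

Lemma at_site_out (s : bs) x : (M <= x)%N -> at_site s x = (false, false).
Proof. by move=> Mx; rewrite /at_site insubN // -leqNgt. Qed.

Lemma at_site_ffun (f : nat -> bool * bool) x :
  at_site [ffun i : 'I_M => f i] x = if (x < M)%N then f x else (false, false).
Proof.
case: ltnP => [xM | /at_site_out //].
by rewrite -[x]/(val (Ordinal xM)) at_site_ord ffunE.
Qed.

Lemma at_site_upd (s : bs) m y x :
  at_site (upd s m y) x = if (x == m) && (x < M)%N then y else at_site s x.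
Proof.
case: (ltnP x M) => [xM | Mx]; last by rewrite andbF !at_site_out.
by rewrite andbT -[x]/(val (Ordinal xM)) !at_site_ord ffunE.
Qed.

Lemma bstate_ext (s t : bs) :
  (forall x, (x < M)%N -> at_site s x = at_site t x) -> s = t.
Proof. by move=> st; apply/ffunP => i; rewrite -!at_site_ord st. Qed.

End Sites.

Section Operators.
Context {R : realType} {M : nat}.
Local Notation bs := (bstate M).
Local Notation n := (hdim M).

Lemma adj_entry (A : 'M[R[i]]_n) i j : adj A i j = (A j i)^*.
Proof. by rewrite !mxE. Qed.

Lemma supported_adj {A : 'M[R[i]]_n} {P} :
  supported A P -> supported (adj A) (fun x z => P z x).
Proof. by move=> hA i j; rewrite adj_entry conjc_eq0 => /hA. Qed.

Lemma cop_supported m : supported (cop R M m)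
  (fun s' s => (at_site s m).1 /\ s' = upd s m (false, (at_site s m).2)).
Proof.
by move=> i j; rewrite mxE; case: ifP => [/andP[? /eqP] | _] //; rewrite eqxx.
Qed.

Lemma sigp_supported m : supported (sigp R M m) (fun s' s => flip_sp s' s m).
Proof.
have flip_supp (f : bs -> bs -> R[i]) :
    supported (opmx (fun s' s => if flip_sp s' s m then f s' s else 0))
              (fun s' s => flip_sp s' s m).
  by move=> i j; rewrite mxE; case: ifP => // _; rewrite eqxx.
by apply: supported_add; [|apply: supported_scale]; apply: flip_supp.
Qed.

(* The spin at site [k+1] is left unconstrained: the [J]-terms flip it. *)
Definition hop (k : nat) (s' s : bs) :=
  [/\ (at_site s k).1, ~~ (at_site s k.+1).1,
      at_site s' k = (false, (at_site s k).2), (at_site s' k.+1).1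
    & forall x, x != k -> x != k.+1 -> at_site s' x = at_site s x].

Lemma cdag_cop_supported {k} : (k.+1 < M)%N ->
  supported (cdag R M k.+1 *m cop R M k) (hop k).
Proof.
move=> kM.
apply: supportedW (supported_mul (supported_adj (cop_supported k.+1)) (cop_supported k)) _.
move=> s' s [y [[occ' ->] [occ y_eq]]].
have E (x : nat) := congr1 (fun w : bs => at_site w x) y_eq.
have kM' : (k < M)%N by apply: ltnW.
move: (E k) (E k.+1).
rewrite !at_site_upd !eqxx kM kM' (ltn_eqF (ltnSn k)) (gtn_eqF (ltnSn k)) /=.
move=> Ek Ek1; split => //; first by rewrite -Ek1.
by move=> x /negbTE xk /negbTE xk1; move: (E x); rewrite !at_site_upd xk xk1.
Qed.

Lemma hop_flip k (s' y s : bs) : hop k s' y -> flip_sp y s k.+1 -> hop k s' s.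
Proof.
move=> [occ emp s'k occ' others] /eqP y_def.
have ys x : at_site y x = if (x == k.+1) && (x < M)%N
    then ((at_site s k.+1).1, ~~ (at_site s k.+1).2) else at_site s x.
  by rewrite y_def at_site_upd.
have ysk : at_site y k = at_site s k by rewrite ys (ltn_eqF (ltnSn k)).
split; rewrite -?ysk //.
- by move: emp; rewrite ys eqxx; case: ifP.
- by move=> x xk xk1; rewrite others // ys (negbTE xk1).
Qed.

Lemma HgJ_supported (J gam : 'I_M.-1 -> R) :
  supported (HgJ J gam) (fun s' s => exists k : 'I_M.-1, hop k s' s \/ hop k s s').
Proof.
pose Q (s' s : bs) := exists k : 'I_M.-1, hop k s' s \/ hop k s s'.
have bond (k : 'I_M.-1) (A : 'M[R[i]]_n) :
    supported A (hop k) -> supported (A + adj A) Q.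
  move=> hA; apply: supported_add.
    by apply: supportedW hA _ => s' s h; exists k; left.
  by apply: supportedW (supported_adj hA) _ => s' s h; exists k; right.
have kM (k : 'I_M.-1) : (k.+1 < M)%N by have := ltn_ord k; lia.
apply: supported_add; last apply: supported_opp.
all: apply: supported_sum => k; apply: (bond k); apply: supported_scale.
- apply: supportedW (supported_mul (cdag_cop_supported (kM k)) (sigp_supported k.+1)) _.
  by move=> s' s [y [h f]]; apply: hop_flip h f.
- exact: cdag_cop_supported (kM k).
Qed.

Lemma cop_entry m i j : cop R M m i j =
  (enum_val i == upd (enum_val j) m (false, (at_site (enum_val j) m).2))%:R *
  ((at_site (enum_val j) m).1%:R * jw R (enum_val j) m).
Proof. by rewrite mxE andbC; case: eqP; case: (_.1); rewrite /= ?mul1r ?mul0r. Qed.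

Lemma jw_conj_mul (s : bs) m : (jw R s m)^* * jw R s m = 1.
Proof. by rewrite /jw rmorphXn rmorphN1 -exprMn mulrNN mulr1 expr1n. Qed.

Lemma upd_empty_inj {m} {s t : bs} :
  (m < M)%N -> (at_site s m).1 -> (at_site t m).1 ->
  upd s m (false, (at_site s m).2) = upd t m (false, (at_site t m).2) -> s = t.
Proof.
move=> mM occ_s occ_t st; apply: bstate_ext => x xM.
have := congr1 (fun w : bs => at_site w x) st; rewrite /= !at_site_upd xM andbT.
case: eqP => [-> [spin_st] | //].
move: occ_s occ_t spin_st.
by case: (at_site s m) => ? ?; case: (at_site t m) => ? ? /= -> -> ->.
Qed.

Lemma cdag_cop_entry (m : 'I_M) i j :
  (cdag R M m *m cop R M m) i j = (i == j)%:R * (enum_val j m).1%:R.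
Proof.
rewrite mxE; under eq_bigr => k _ do rewrite adj_entry [cop _ _ _ k j]cop_entry mulrCA.
rewrite (sum_enum_val_eq (fun k => (cop R M m k i)^* * _)) cop_entry enum_rankK.
rewrite !rmorphM /= !rmorph_nat -!at_site_ord.
case: (eqVneq i j) => [-> | ij].
  by rewrite !eqxx; case: (_.1); rewrite /= ?mul1r ?jw_conj_mul ?mul0r.
rewrite mul0r; case occ_i: (at_site _ m).1; last by rewrite mul0r mulr0 mul0r.
case occ_j: (at_site _ m).1; last by rewrite mul0r mulr0.
case: eqP => [/esym/(upd_empty_inj (ltn_ord m) occ_i occ_j)/enum_val_inj ij_eq | _].
  by rewrite ij_eq eqxx in ij.
by rewrite !mul0r.
Qed.

Lemma Nop_entry i j :
  Nop R M i j = (i == j)%:R * #|[set x | (enum_val j x).1]|%:R.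
Proof.
rewrite summxE (eq_bigr _ (fun m _ => cdag_cop_entry m i j)) -mulr_sumr -natr_sum.
rewrite -sum1_card [in RHS]big_mkcond; congr (_ * _%:R).
by apply: eq_bigr => x _; rewrite inE.
Qed.

Lemma sigz_entry m i j :
  sigz R M m i j = (i == j)%:R * (if (at_site (enum_val j) m).2 then 1 else -1).
Proof. by rewrite mxE (inj_eq enum_val_inj); case: eqP; rewrite ?mul1r ?mul0r. Qed.

End Operators.

Section PairStates.
Context {M : nat}.
Local Notation bs := (bstate M).
Local Notation spins := {ffun 'I_M.-1 -> bool}.

(* A spin configuration with spin up at site 0 (the paper's site 1) is encoded
   by the spins [σ] of the sites 1, ..., M-1. *)
Definition spin_of (σ : spins) (x : nat) : bool :=
  if x is y.+1 then oapp σ false (insub y) else true.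

Definition pair_state (d a : nat) (σ : spins) : bs :=
  [ffun x : 'I_M => ((val x == a) || (val x == (a + d)%N), spin_of σ x)].

Definition spins_of (s : bs) : spins := [ffun o : 'I_M.-1 => (at_site s o.+1).2].

Lemma at_pair_state d a σ x : at_site (pair_state d a σ) x =
  if (x < M)%N then ((x == a) || (x == (a + d)%N), spin_of σ x) else (false, false).
Proof. exact: (at_site_ffun (fun y => ((y == a) || (y == (a + d)%N), spin_of σ y))). Qed.

Lemma pair_state_inj {d a b σ τ} : (0 < d)%N -> (a < M)%N -> (b < M)%N ->
  pair_state d a σ = pair_state d b τ -> a = b /\ σ = τ.
Proof.
move=> d_gt0 aM bM st.
have E x : (x < M)%N ->
    ((x == a) || (x == (a + d)%N), spin_of σ x) =
    ((x == b) || (x == (b + d)%N), spin_of τ x).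
  by move=> xM; have := congr1 (fun w : bs => at_site w x) st; rewrite /= !at_pair_state xM.
split.
  by move: (E a aM) (E b bM); rewrite !eqxx /= => -[/esym ab _] [ba _]; lia.
apply/ffunP => o; have oM : (o.+1 < M)%N by have := ltn_ord o; lia.
by case: (E _ oM) => _; rewrite /= valK.
Qed.

Lemma pair_stateP d a (s : bs) : (at_site s 0).2 ->
  (forall x, (x < M)%N -> (at_site s x).1 = (x == a) || (x == (a + d)%N)) ->
  s = pair_state d a (spins_of s).
Proof.
move=> up0 occ; apply: bstate_ext => x xM; rewrite at_pair_state xM -occ //.
case: x xM => [|y] yM; rewrite [LHS]surjective_pairing /=; first by rewrite up0.
have yM' : (y < M.-1)%N by lia.
by rewrite insubT /= ffunE.
Qed.

Lemma pair_state_uncurry_inj d N : (0 < d)%N -> (N <= M)%N ->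
  injective (fun p : 'I_N * spins => pair_state d p.1 p.2).
Proof.
move=> d_gt0 NM [a σ] [b τ] /=.
move/(pair_state_inj d_gt0 (leq_trans (ltn_ord a) NM) (leq_trans (ltn_ord b) NM)).
by case=> ab ->; congr pair; apply: val_inj.
Qed.

Definition nn_state (p : 'I_M.-1 * spins) : bs := pair_state 1 p.1 p.2.
Definition nnn_state (p : 'I_M.-2 * spins) : bs := pair_state 2 p.1 p.2.

Lemma nn_state_inj : injective nn_state.
Proof. exact: pair_state_uncurry_inj (leq_pred M). Qed.

Lemma nnn_state_inj : injective nnn_state.
Proof. exact: pair_state_uncurry_inj (leq_trans (leq_pred _) (leq_pred M)). Qed.

Lemma hop_nn_state p k (s : bs) : (k.+1 < M)%N ->
  hop k s (nn_state p) \/ hop k (nn_state p) s -> exists q, s = nnn_state q.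
Proof.
case: p => [a σ] kM; have aM := ltn_ord a; have M_gt0 : (0 < M)%N by lia.
rewrite /nn_state /=.
case=> -[occ emp s_k s_k1 others].
- move: occ emp; rewrite !at_pair_state kM ltnW //= => occ emp.
  have ka : k = a.+1 by lia.
  have aM2 : (a < M.-2)%N by lia.
  exists (Ordinal aM2, spins_of s); apply: pair_stateP => /=.
    by rewrite others ?at_pair_state ?M_gt0 //; lia.
  move=> x xM; case: (eqVneq x k) => [-> | xk]; first by rewrite s_k /=; lia.
  case: (eqVneq x k.+1) => [-> | xk1]; first by rewrite s_k1; lia.
  by rewrite others // at_pair_state xM /=; lia.
- move: s_k s_k1; rewrite !at_pair_state kM ltnW //= => -[s_k s_k_up] s_k1.
  have ka : k.+1 = a by lia.
  have kM2 : (k < M.-2)%N by lia.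
  exists (Ordinal kM2, spins_of s); apply: pair_stateP => /=.
    case: (eqVneq k 0) => [k0 | k_gt0]; first by move: s_k_up; rewrite k0 => <-.
    by rewrite -others ?at_pair_state ?M_gt0 //; lia.
  move=> x xM; case: (eqVneq x k) => [-> | xk]; first by rewrite occ; lia.
  case: (eqVneq x k.+1) => [-> | xk1]; first by rewrite (negbTE emp); lia.
  by rewrite -others // at_pair_state xM /=; lia.
Qed.

End PairStates.

Section NearestNeighbourPairs.
Context {R : realType} {M : nat}.
Local Notation spins := {ffun 'I_M.-1 -> bool}.

Definition nn_basis : 'M[R[i]]_(#|{: 'I_M.-1 * spins}|, hdim M) :=
  basis_mx (@nn_state M).
Definition nnn_basis : 'M[R[i]]_(#|{: 'I_M.-2 * spins}|, hdim M) :=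
  basis_mx (@nnn_state M).

Lemma nn_basis_free : row_free nn_basis.
Proof. exact: basis_mx_free nn_state_inj. Qed.

Lemma card_occupied_nn_state (p : 'I_M.-1 * spins) :
  #|[set x | (nn_state p x).1]| = 2.
Proof.
case: p => [a σ]; have aM : (a.+1 < M)%N by have := ltn_ord a; lia.
have -> : [set x | (nn_state (a, σ) x).1] = [set Ordinal (ltnW aM); Ordinal aM].
  by apply/setP => x; rewrite !inE ffunE /= -!val_eqE /= addn1.
by rewrite cards2 -val_eqE /= (ltn_eqF (ltnSn a)).
Qed.

Lemma nn_basis_Nop : nn_basis *m (Nop R M)^T = 2%:R *: nn_basis.
Proof.
apply: (basis_mx_mul_diag (fun s : bstate M => #|[set x | (s x).1]|%:R) Nop_entry).
by move=> p /=; rewrite card_occupied_nn_state.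
Qed.

Lemma nn_basis_sigz0 : nn_basis *m (sigz R M 0)^T = 1 *: nn_basis.
Proof.
pose up0 (s : bstate M) : R[i] := if (at_site s 0).2 then 1 else -1.
apply: (basis_mx_mul_diag up0 (sigz_entry 0)) => -[a σ].
have M_gt0 : (0 < M)%N by have := ltn_ord a; lia.
by rewrite /up0 at_pair_state M_gt0.
Qed.

Lemma nn_basis_HgJ (J gam : 'I_M.-1 -> R) :
  (nn_basis *m (HgJ J gam)^T <= nnn_basis)%MS.
Proof.
apply: basis_mx_mul_supported nnn_state_inj (HgJ_supported J gam) _ => p s [k hop_k].
by apply: hop_nn_state hop_k; have := ltn_ord k; lia.
Qed.

Lemma card_nn_configs : (2 <= M)%N ->
  #|{: 'I_M.-1 * spins}| = (#|{: 'I_M.-2 * spins}| + 2 ^ (M - 1))%N.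
Proof.
move=> M_ge2; rewrite !card_prod card_ffun !card_ord card_bool subn1.
have -> : M.-1 = M.-2.+1 by lia.
by rewrite mulSn addnC.
Qed.

End NearestNeighbourPairs.

Theorem mainTheorem4 (R : realType) (M : nat) (hM : (2 <= M)%N)
    (J gam : 'I_M.-1 -> R) (hgam : forall k, gam k != 0) :
  exists P : 'M[R[i]]_(2 ^ (M - 1), hdim M),
    row_free P /\
    forall k : 'I_(2 ^ (M - 1)),
      let v := (row k P)^T in
      [/\ Nop R M *m v = 2%:R *: v,
          sigz R M 0 *m v = v &
          HgJ J gam *m v = 0].
Proof.
have [P [P_free P_nn P_ker]] := row_free_sub_ker (@nn_basis_free R M)
  (nn_basis_HgJ J gam) (eq_leq (esym (card_nn_configs hM))).
exists P; split => // k v; split; rewrite /v.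
- exact/row_tr_mul_scale/(submx_mul_scale P_nn nn_basis_Nop).
- rewrite -[RHS]scale1r.
  exact/row_tr_mul_scale/(submx_mul_scale P_nn nn_basis_sigz0).
- by rewrite -(scale0r (row k P)^T); apply: row_tr_mul_scale; rewrite P_ker scale0r.
Qed.
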